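(* In the setting described in the context, for every $t\ge0$ the long exponential rate satisfies $R_{t\infty}\ge0$.
   Context: Let $(\Omega,\mathcal F,\mathbb P)$ be a probability space with a filtration $\{\mathcal F_t\}_{t\ge0}$ satisfying the usual conditions; (in)equalities between random variables hold a.s. A pricing kernel is an $\{\mathcal F_t\}$-adapted càdlàg semimartingale $\{\pi_t\}_{t\ge0}$ with (a) $\pi_t>0$ for all $t\ge0$, (b) $\mathbb E[\pi_t]<\infty$ for all $t\ge0$, (c) $\liminf_{t\to\infty}\mathbb E[\pi_t]=0$. Fix such a pricing kernel. The discount bond price is $P_{tT}=\pi_t^{-1}\mathbb E[\pi_T\mid\mathcal F_t]$ for $0\le t<T$. The exponential rate is $R_{tT}=-(T-t)^{-1}\ln P_{tT}$. For a family $\{A_x\}_{x\in\mathbb R^+}$ of $\mathcal F_t$-measurable extended-real random variables, $\limsup_{x\to\infty}A_x:=\operatorname{ess\,inf}_{x}\operatorname{ess\,sup}_{y\ge x}A_y$ and $\liminf_{x\to\infty}A_x:=\operatorname{ess\,sup}_{x}\operatorname{ess\,inf}_{y\ge x}A_y$, where essential supremum/infimum are taken among $\mathcal F_t$-measurable random variables (the essential supremum of a family being the a.s.-smallest random variable dominating every member a.s.). The long exponential rate is $R_{t\infty}=\limsup_{T\to\infty}R_{tT}$. *)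

From HB Require Import structures.
From mathcomp Require Import all_boot all_order all_algebra.
From mathcomp Require Import all_classical all_reals all_analysis.
From mathcomp Require Import measurable_realfun.
Set Implicit Arguments. Unset Strict Implicit. Unset Printing Implicit Defensive.
Import Order.TTheory GRing.Theory Num.Theory.
Import numFieldNormedType.Exports.
Local Open Scope classical_set_scope.
Local Open Scope ring_scope.

Section Defs.
Context {d : measure_display} {T : measurableType d} {R : realType}.
Variable P : probability T R.

Definition Gmeas (G : set (set T)) (X : T -> R) :=
  forall B : set R, measurable B -> G (X @^-1` B).
Definition GmeasE (G : set (set T)) (X : T -> \bar R) :=
  forall B : set (\bar R), measurable B -> G (X @^-1` B).

Definition filtration (F : R -> set (set T)) :=
  (forall t, 0 <= t -> sigma_algebra setT (F t) /\ F t `<=` measurable) /\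
  (forall s t, 0 <= s -> s <= t -> F s `<=` F t).
Definition usual_conditions (F : R -> set (set T)) :=
  (forall N : set T, P.-negligible N -> F 0 N) /\
  (forall t, 0 <= t -> F t = \bigcap_(s in [set s | t < s]) F s).

Definition adapted (F : R -> set (set T)) (X : R -> T -> R) :=
  forall t, 0 <= t -> Gmeas (F t) (X t).

Definition cadlag (X : R -> T -> R) :=
  forall w, forall t, 0 <= t ->
    (X s w @[s --> t^'+] --> X t w) /\ (0 < t -> cvg (X s w @[s --> t^'-])).

Definition stopping_time (F : R -> set (set T)) (tau : T -> \bar R) :=
  (forall w, (0 <= tau w)%E) /\
  (forall t, 0 <= t -> F t [set w | (tau w <= t%:E)%E]).

Definition stopped (X : R -> T -> R) (tau : T -> \bar R) : R -> T -> R :=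
  fun t w => if (tau w < t%:E)%E then X (fine (tau w)) w else X t w.

(* martingale: adapted, integrable, and E[M_t | F_s] = M_s for s <= t
   (written out via the defining property of conditional expectation) *)
Definition martingale (F : R -> set (set T)) (M : R -> T -> R) :=
  adapted F M /\
  (forall t, 0 <= t -> P.-integrable setT (EFin \o M t)) /\
  (forall s t, 0 <= s -> s <= t -> forall A, F s A ->
     (\int[P]_(w in A) (M t w)%:E = \int[P]_(w in A) (M s w)%:E)%E).

Definition local_martingale (F : R -> set (set T)) (M : R -> T -> R) :=
  adapted F M /\ cadlag M /\
  exists tau : nat -> T -> \bar R,
    (forall n, stopping_time F (tau n)) /\
    (forall n w, (tau n w <= tau n.+1 w)%E) /\
    {ae P, forall w, tau n w @[n --> \oo] --> +oo%E} /\
    (forall n, martingale F (stopped M (tau n))).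

Definition finite_variation (F : R -> set (set T)) (A : R -> T -> R) :=
  adapted F A /\ cadlag A /\
  forall w t, 0 <= t -> exists C : R, forall (n : nat) (u : nat -> R),
    0 <= u 0%N -> (forall i, u i <= u i.+1) -> u n <= t ->
    \sum_(i < n) `|A (u i.+1) w - A (u i) w| <= C.

Definition semimartingale (F : R -> set (set T)) (X : R -> T -> R) :=
  adapted F X /\ cadlag X /\
  exists M A : R -> T -> R,
    local_martingale F M /\ (forall w, M 0 w = 0) /\
    finite_variation F A /\ (forall w, A 0 w = 0) /\
    (forall t w, 0 <= t -> X t w = X 0 w + M t w + A t w).

Definition pricing_kernel (F : R -> set (set T)) (pi : R -> T -> R) :=
  semimartingale F pi /\
  (forall t w, 0 <= t -> 0 < pi t w) /\
  (forall t, 0 <= t -> (\int[P]_w (pi t w)%:E < +oo)%E) /\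
  (ereal_sup [set ereal_inf [set (\int[P]_w (pi t w)%:E)%E | t in [set t | x <= t]]
              | x in [set x | 0 <= x]] = 0%E).

Definition is_cond_exp (G : set (set T)) (X Y : T -> R) :=
  Gmeas G Y /\ P.-integrable setT (EFin \o Y) /\
  (forall A, G A -> (\int[P]_(w in A) (Y w)%:E = \int[P]_(w in A) (X w)%:E)%E).

Definition is_ess_sup (G : set (set T)) (I : set R) (A : R -> T -> \bar R)
    (S : T -> \bar R) :=
  GmeasE G S /\
  (forall i, I i -> {ae P, forall w, (A i w <= S w)%E}) /\
  (forall S', GmeasE G S' -> (forall i, I i -> {ae P, forall w, (A i w <= S' w)%E}) ->
     {ae P, forall w, (S w <= S' w)%E}).
Definition is_ess_inf (G : set (set T)) (I : set R) (A : R -> T -> \bar R)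
    (S : T -> \bar R) :=
  GmeasE G S /\
  (forall i, I i -> {ae P, forall w, (S w <= A i w)%E}) /\
  (forall S', GmeasE G S' -> (forall i, I i -> {ae P, forall w, (S' w <= A i w)%E}) ->
     {ae P, forall w, (S' w <= S w)%E}).

End Defs.

(* discount bond price P_tT = pi_t^{-1} E[pi_T | F_t] is condE t T w / pi t w,
   with condE t T a chosen version of E[pi_T | F_t]. *)
(* exponential rate R_tT = -(T-t)^{-1} ln P_tT, as an extended real;
   set to +oo where P_tT <= 0 (a P-null event, where ln P_tT = -oo) *)
Definition exp_rate {T : Type} {R : realType} (pi : R -> T -> R)
    (condE : R -> R -> T -> R) (t u : R) (w : T) : \bar R :=
  let p := condE t u w / pi t w in
  if 0 < p then ((- ln p) / (u - t))%:E else +oo%E.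

From HB Require Import structures.
From mathcomp Require Import all_boot all_order all_algebra.
From mathcomp Require Import all_classical all_reals all_analysis.
From mathcomp Require Import measurable_realfun.
Import Order.TTheory GRing.Theory Num.Theory.
Local Open Scope classical_set_scope.
Local Open Scope ring_scope.

(* Let A be the F_t-event where sup_{u >= x} R_tu < 0.  On A every bond with
   maturity u >= x has price P_tu > 1, i.e. E[pi_u | F_t] > pi_t, so
   E[pi_t 1_A] <= E[E[pi_u | F_t] 1_A] = E[pi_u 1_A] <= E[pi_u].  Letting u
   run to infinity along liminf E[pi_u] = 0 gives E[pi_t 1_A] = 0, hence
   P(A) = 0 because pi_t > 0.  Thus 0 is an F_t-measurable lower bound of every
   ess sup_{u >= x} R_tu and therefore lies below their essential infimum. *)

Lemma exp_rate_lt0_lt_cond {T : Type} {R : realType} (pi : R -> T -> R)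
    (condE : R -> R -> T -> R) (t u : R) (w : T) :
  t < u -> 0 < pi t w -> (exp_rate pi condE t u w < 0)%E -> pi t w < condE t u w.
Proof.
move=> tu pi_gt0; rewrite /exp_rate; case: ifPn => p_gt0; last by rewrite ltNge leey.
rewrite lte_fin pmulr_llt0 ?invr_gt0 ?subr_gt0 // oppr_lt0 => ln_gt0.
have p_gt1 : 1 < condE t u w / pi t w.
  by rewrite ltNge; apply/negP => /ln_le0; rewrite leNgt ln_gt0.
by rewrite -(mul1r (pi t w)) -ltr_pdivlMr.
Qed.

Lemma lb_eventually_le_liminf {R : realType} {f : R -> \bar R} {l c : \bar R} {x0 : R} :
  ereal_sup [set ereal_inf [set f u | u in [set u | x <= u]] | x in [set x | 0 <= x]] = l ->
  0 <= x0 -> (forall u, x0 <= u -> (c <= f u)%E) -> (c <= l)%E.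
Proof.
move=> <- x0_ge0 c_lb; apply: (@le_trans _ _ (ereal_inf [set f u | u in [set u | x0 <= u]])).
  by apply: le_ereal_inf_tmp => _ [u xu <-]; exact: c_lb.
by apply: ereal_sup_ubound; exists x0.
Qed.

Section conditional_expectation.
Context {d : measure_display} {T : measurableType d} {R : realType}.
Variable P : probability T R.

Lemma Gmeas_measurable_fun {G : set (set T)} {X : T -> R} :
  G `<=` measurable -> Gmeas G X -> measurable_fun setT X.
Proof. by move=> GM GX _ B mB; rewrite setTI; apply/GM/GX. Qed.

Lemma adapted_measurable_fun {F : R -> set (set T)} {X : R -> T -> R} (u : R) :
  filtration F -> adapted F X -> 0 <= u -> measurable_fun setT (EFin \o X u).
Proof.
move=> [F_sigma _] FX u0; apply: measurableT_comp => //.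
exact: Gmeas_measurable_fun (F_sigma u u0).2 (FX u u0).
Qed.

Lemma GmeasE_cst (G : set (set T)) (c : \bar R) :
  sigma_algebra setT G -> GmeasE G (cst c).
Proof.
move=> [G0 GC _] B _; have [Bc|Bc] := pselect (B c).
  by rewrite preimage_cst ifT ?inE//; move: (GC _ G0); rewrite setD0.
by rewrite preimage_cst ifF//; apply/negbTE; rewrite notin_setE.
Qed.

Lemma ae_not_of_gt0_integral_le0 {A : set T} {f : T -> R} :
  measurable A -> measurable_fun A (EFin \o f) -> (forall w, 0 < f w) ->
  (\int[P]_(w in A) (f w)%:E <= 0)%E -> {ae P, forall w, ~ A w}.
Proof.
move=> mA mf f_gt0 int_le0.
have int_abs0 : (\int[P]_(w in A) `|(EFin \o f) w| = 0)%E.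
  apply/eqP; rewrite eq_le integral_ge0 ?andbT => [|w _]; last exact: abse_ge0.
  by under eq_integral => w _ do rewrite gee0_abs ?lee_fin ?ltW//.
apply: filterS ((ae_eq_integral_abs P mA mf).1 int_abs0) => w f0 Aw.
by move: (f0 Aw) => /= [] /eqP; rewrite gt_eqF.
Qed.

Lemma integral_le_cond_exp {G : set (set T)} {X Y Z : T -> R} {A : set T} :
  G `<=` measurable -> is_cond_exp P G X Y ->
  measurable_fun setT (EFin \o X) -> (forall w, 0 <= X w) ->
  measurable_fun setT (EFin \o Z) -> (forall w, 0 <= Z w) ->
  G A -> {ae P, forall w, A w -> Z w <= Y w} ->
  (\int[P]_(w in A) (Z w)%:E <= \int[P]_w (X w)%:E)%E.
Proof.
move=> GM [GY [_ condEY]] mX X_ge0 mZ Z_ge0 GA Z_le_Y.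
have mA := GM _ GA.
have mY := Gmeas_measurable_fun GM GY.
have mEY : measurable_fun setT (EFin \o Y) by apply: measurableT_comp.
have mabsY : measurable_fun setT (fun w => (`|Y w|)%:E).
  by apply: measurableT_comp => //; apply: measurableT_comp.
have onA (f : T -> \bar R) : measurable_fun setT f -> measurable_fun A f.
  exact: measurable_funS.
apply: (@le_trans _ _ (\int[P]_(w in A) (`|Y w|)%:E)%E).
  apply: ae_ge0_le_integral => //.
  - by move=> w _; rewrite lee_fin.
  - exact: onA.
  - exact: onA.
  by apply: filterS Z_le_Y => w h Aw; rewrite lee_fin (le_trans (h Aw)) ?ler_norm.
have Y_eq_absY : (\int[P]_(w in A) (`|Y w|)%:E = \int[P]_(w in A) (Y w)%:E)%E.
  apply: ae_eq_integral => //; [exact: onA|exact: onA|].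
  apply: filterS Z_le_Y => w h Aw; congr EFin; apply: ger0_norm.
  exact: le_trans (Z_ge0 w) (h Aw).
rewrite Y_eq_absY condEY //; apply: ge0_subset_integral => // w _.
by rewrite lee_fin.
Qed.

End conditional_expectation.

Theorem proposition1 (d : measure_display) (T : measurableType d) (R : realType)
  (P : probability T R) (F : R -> set (set T)) (pi : R -> T -> R) :
  filtration F -> usual_conditions P F -> pricing_kernel P F pi ->
  forall condE : R -> R -> T -> R,
  (* condE t u is a version of E[pi_u | F_t] for 0 <= t < u *)
  (forall t u, 0 <= t -> t < u -> is_cond_exp P (F t) (pi u) (condE t u)) ->
  forall t : R, 0 <= t ->
  forall (S : R -> T -> \bar R) (Rinf : T -> \bar R),
  (* S x = ess sup_{u >= x, u > t} R_tu *)
  (forall x, is_ess_sup P (F t) [set u | x <= u /\ t < u]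
                (exp_rate pi condE t) (S x)) ->
  (* Rinf = ess inf_x S x = limsup_{u -> oo} R_tu = R_{t oo} *)
  is_ess_inf P (F t) setT S Rinf ->
  {ae P, forall w, (0 <= Rinf w)%E}.
Proof.
move=> FF _ [[piF _] [pi_gt0 [_ pi_liminf]]] condE condEP t t0 S Rinf SP
  [_ [_ Rinf_max]].
have [Ft_sigma Ft_meas] := FF.1 t t0.
have mpi u := adapted_measurable_fun u FF piF.
apply: Rinf_max => [|x _]; first exact: GmeasE_cst.
pose A := S x @^-1` (setT `&` [set y : \bar R | (y < 0)%E]).
have FtA : F t A by apply: (SP x).1; apply: emeasurable_fun_infty_o.
pose x0 := Num.max x (t + 1).
have x0_ge0 : 0 <= x0 by rewrite le_max (ltW (ltr_pwDr ltr01 t0)) orbT.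
have int_A_le u : x0 <= u -> (\int[P]_(w in A) (pi t w)%:E <= \int[P]_w (pi u w)%:E)%E.
  move=> x0u; have tu : t < u by apply: lt_le_trans x0u; rewrite lt_max ltrDl ltr01 orbT.
  have xu : x <= u by apply: le_trans x0u; rewrite le_max lexx.
  have u0 : 0 <= u by apply: le_trans (ltW tu).
  apply: (integral_le_cond_exp P Ft_meas (condEP t u t0 tu)) => //.
  - exact: mpi.
  - by move=> w; have := pi_gt0 u w u0; exact: ltW.
  - exact: mpi.
  - by move=> w; have := pi_gt0 t w t0; exact: ltW.
  apply: filterS ((SP x).2.1 u (conj xu tu)) => w rate_le [_ Aw].
  exact/ltW/exp_rate_lt0_lt_cond/(le_lt_trans rate_le Aw)/pi_gt0.
have int_A_le0 :=
  lb_eventually_le_liminf (f := fun u => \int[P]_w (pi u w)%:E)%E pi_liminf x0_ge0 int_A_le.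
have mpiA := measurable_funS measurableT (@subsetT _ A) (mpi t t0).
apply: filterS (ae_not_of_gt0_integral_le0 P (Ft_meas _ FtA) mpiA _ int_A_le0) => [w|w].
  by rewrite leNgt => notA; apply/negP => Sw; apply: notA.
exact: pi_gt0.
Qed.
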